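(* If $G$ is a connected locally Ore graph of order $n \ge 4$, then $G$ is $3$-connected.
   Context: A graph $G$ is locally Ore if for every vertex $v \in V(G)$ and every pair $u,w$ of non-adjacent vertices in $N(v)$, $\deg_{\langle N(v)\rangle}(u) + \deg_{\langle N(v)\rangle}(w) \ge \deg_G(v)$, where $N(v)$ is the open neighbourhood of $v$ and $\langle N(v)\rangle$ the subgraph induced by it. *)

From mathcomp Require Import all_boot.
Set Implicit Arguments. Unset Strict Implicit. Unset Printing Implicit Defensive.

Definition simple_graph (T : finType) (e : rel T) : Prop :=
  symmetric e /\ irreflexive e.

Definition nbhd (T : finType) (e : rel T) (v : T) : {set T} := [set x | e v x].

Definition deg (T : finType) (e : rel T) (v : T) : nat := #|nbhd e v|.

Definition deg_in (T : finType) (e : rel T) (A : {set T}) (u : T) : nat :=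
  #|[set x in A | e u x]|.

Definition locally_ore (T : finType) (e : rel T) : Prop :=
  forall v u w : T, u \in nbhd e v -> w \in nbhd e v -> u != w -> ~~ e u w ->
    deg e v <= deg_in e (nbhd e v) u + deg_in e (nbhd e v) w.

Definition connected_on (T : finType) (e : rel T) (A : {set T}) : Prop :=
  forall x y, x \in A -> y \in A ->
    connect [rel a b | [&& e a b, a \in A & b \in A]] x y.

Definition connected (T : finType) (e : rel T) : Prop := connected_on e setT.

Definition k_connected (k : nat) (T : finType) (e : rel T) : Prop :=
  k < #|T| /\ forall S : {set T}, #|S| < k -> connected_on e (~: S).

(* If [S] has at most two vertices and [s \in S], two neighbours of [s]
   outside [S] are equal, adjacent, or have two common neighbours in
   [N(s)], one of which avoids [S]; and two adjacent vertices [s, t] of [S]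
   have a common neighbour, which is then outside [S = {s, t}]. Hence any
   path of [G] between vertices outside [S] can be rerouted around [S]. *)
From mathcomp Require Import all_boot.
From mathcomp Require Import zify.
Set Implicit Arguments. Unset Strict Implicit. Unset Printing Implicit Defensive.

Lemma connect_ind_pred (T : finType) (R : rel T) (P : T -> Prop) x y :
  P x -> (forall a b, R a b -> P a -> P b) -> connect R x y -> P y.
Proof.
move=> Px stepP /connectP [p pth ->]; elim: p x Px pth => [|z p IHp] x Px //=.
by case/andP=> Rxz pth; apply: IHp (stepP _ _ Rxz Px) pth.
Qed.

Lemma card_le2_eq_pair (T : finType) (S : {set T}) a b :
  #|S| <= 2 -> a \in S -> b \in S -> a != b -> S = [set a; b].
Proof.
move=> S2 aS bS ab; apply/esym/eqP; rewrite eqEcard cards2 ab S2 andbT.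
by apply/subsetP=> z /set2P [] ->.
Qed.

Lemma exists_notin_of_card_lt (T : finType) (A B : {set T}) :
  #|B| < #|A| -> exists2 x, x \in A & x \notin B.
Proof.
move=> BA; apply/subsetPn; apply: contraTN BA => /subset_leq_card.
by rewrite leqNgt.
Qed.

Section LocallyOre.

Variables (T : finType) (e : rel T).
Hypotheses (e_sym : symmetric e) (e_irr : irreflexive e) (e_ore : locally_ore e).

Definition induced (A : {set T}) : rel T :=
  [rel a b | [&& e a b, a \in A & b \in A]].

Definition common_nbhd (v u w : T) : {set T} :=
  [set x in nbhd e v | e u x && e w x].

(* Both [N(u) ∩ N(v)] and [N(w) ∩ N(v)] lie in [N(v) \ {u, w}], of size
   [deg v - 2], while their sizes add up to at least [deg v]. *)
Lemma locally_ore_common_nbhd v u w :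
  e v u -> e v w -> u != w -> ~~ e u w -> 1 < #|common_nbhd v u w|.
Proof.
move=> evu evw uw euw.
have uN : u \in nbhd e v by rewrite inE.
have wN : w \in nbhd e v by rewrite inE.
have ore_uw := e_ore uN wN uw euw; rewrite /deg_in in ore_uw.
set X := [set x in nbhd e v | e u x] in ore_uw.
set Y := [set x in nbhd e v | e w x] in ore_uw.
have -> : common_nbhd v u w = X :&: Y.
  by apply/setP=> x; rewrite !inE andbACA andbb.
have XY_sub : X :|: Y \subset nbhd e v :\ u :\ w.
  apply/subsetP=> x; rewrite !inE.
  case: eqP => [-> | _]; first by rewrite e_irr (negbTE euw) !andbF.
  case: eqP => [-> | _]; first by rewrite e_irr (e_sym w u) (negbTE euw) !andbF.
  by case/orP=> /andP [].
have := subset_leq_card XY_sub; have := cardsUI X Y.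
have := cardsD1 u (nbhd e v); rewrite uN.
have := cardsD1 w (nbhd e v :\ u); rewrite !inE eq_sym uw evw.
rewrite /deg in ore_uw; lia.
Qed.

Lemma nbhd_avoiding_connect (S : {set T}) s u u' :
  #|S| <= 2 -> s \in S -> e s u -> e s u' -> u \notin S -> u' \notin S ->
  connect (induced (~: S)) u u'.
Proof.
move=> S2 sS esu esu' uS u'S.
have edge a b : e a b -> a \notin S -> b \notin S -> connect (induced (~: S)) a b.
  by move=> eab aS bS; apply: connect1; rewrite /induced /= !inE eab aS bS.
have [<- | uu'] := eqVneq u u'; first exact: connect0.
have [euu' | neuu'] := boolP (e u u'); first exact: edge.
have S_s : #|S :\ s| < #|common_nbhd s u u'|.
  have := locally_ore_common_nbhd esu esu' uu' neuu'.
  have := cardsD1 s S; rewrite sS; lia.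
have [c] := exists_notin_of_card_lt S_s; rewrite !inE => /and3P [esc euc eu'c].
rewrite negb_and negbK => /orP [/eqP c_s | cS]; first by rewrite c_s e_irr in esc.
by apply: connect_trans (edge _ _ euc uS cS) (edge _ _ _ cS u'S); rewrite e_sym.
Qed.

Lemma connected_boundary_edge (A : {set T}) a0 b0 :
  connected e -> a0 \in A -> b0 \notin A ->
  exists a b, [&& a \in A, b \notin A & e a b].
Proof.
move=> conn a0A b0A.
case: (pickP (fun ab : T * T => [&& ab.1 \in A, ab.2 \notin A & e ab.1 ab.2]))
  => [[a b] boundary_ab | no_edge]; first by exists a, b.
suff : b0 \in A by rewrite (negbTE b0A).
apply: (connect_ind_pred (P := fun x => x \in A)) a0A _ (conn a0 b0 (in_setT _) (in_setT _)).
move=> a b /and3P [eab _ _] aA.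
by move: (no_edge (a, b)); rewrite /= aA eab andbT => /negbFE.
Qed.

(* If [N(s) = {t}], an edge [t b] leaving [{s, t}] makes [s, b] a
   non-adjacent pair in [N(t)]; their common neighbour would be [t]. *)
Lemma exists_other_nbr s t :
  connected e -> 2 < #|T| -> e s t -> exists2 y, e s y & y != t.
Proof.
move=> conn T3 est.
case: (pickP (fun y => e s y && (y != t))) => [y /andP [] | no_other]; first by exists y.
have nbr_s y : e s y -> y = t.
  by move=> esy; apply/eqP; move: (no_other y); rewrite esy => /negbFE.
have [b0 _ b0st] : exists2 b, b \in [set: T] & b \notin [set s; t].
  apply: exists_notin_of_card_lt; rewrite cardsT cards2.
  by case: (s != t); apply: leq_trans T3.
have [a [b /and3P []]] := connected_boundary_edge conn (set21 s t) b0st.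
case/set2P=> -> {a}; rewrite !inE negb_or => /andP [bs bt] eab.
  by rewrite (nbr_s _ eab) eqxx in bt.
have nesb : ~~ e s b by apply: contra bt => /nbr_s ->.
have ets : e t s by rewrite e_sym.
have sb : s != b by rewrite eq_sym.
have /ltnW /card_gt0P [c] := locally_ore_common_nbhd ets eab sb nesb.
rewrite !inE => /and3P [etc esc _].
by rewrite (nbr_s _ esc) e_irr in etc.
Qed.

Lemma edge_common_nbr s t :
  connected e -> 2 < #|T| -> e s t -> exists2 c, e s c & e t c.
Proof.
move=> conn T3 est; have [x esx xt] := exists_other_nbr conn T3 est.
have [etx | netx] := boolP (e t x); first by exists x.
have tx : t != x by rewrite eq_sym.
have /ltnW /card_gt0P [c] := locally_ore_common_nbhd est esx tx netx.
by rewrite !inE => /and3P [esc etc _]; exists c.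
Qed.

(* The invariant carried along a path of [G] starting at [x \notin S]:
   a vertex of [S] is replaced by its neighbours outside [S]. *)
Definition reached_around (S : {set T}) (x v : T) : Prop :=
  if v \in S then forall u, e v u -> u \notin S -> connect (induced (~: S)) x u
  else connect (induced (~: S)) x v.

Lemma reached_around_edge (S : {set T}) x a b :
  connected e -> 2 < #|T| -> #|S| <= 2 -> e a b ->
  reached_around S x a -> reached_around S x b.
Proof.
move=> conn T3 S2 eab; rewrite /reached_around.
have [aS | aS] := boolP (a \in S); have [bS | bS] := boolP (b \in S).
- move=> reach_a u ebu uS.
  have [c eac ebc] := edge_common_nbr conn T3 eab.
  have cS : c \notin S.
    have ab : a != b by apply: contraTneq eab => ->; rewrite e_irr.
    rewrite (card_le2_eq_pair S2 aS bS ab) !inE negb_or.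
    by apply/andP; split; [apply: contraTneq eac | apply: contraTneq ebc] => ->;
      rewrite e_irr.
  exact: connect_trans (reach_a _ eac cS) (nbhd_avoiding_connect S2 bS ebc ebu cS uS).
- by move/(_ b eab bS).
- move=> reach_a u ebu uS; apply: connect_trans reach_a _.
  by apply: nbhd_avoiding_connect S2 bS _ ebu aS uS; rewrite e_sym.
- move=> reach_a; apply: connect_trans reach_a (connect1 _).
  by rewrite /induced /= !inE eab aS bS.
Qed.

End LocallyOre.

Theorem mainTheorem4 (T : finType) (e : rel T) :
  simple_graph e -> connected e -> 4 <= #|T| -> locally_ore e ->
  k_connected 3 e.
Proof.
move=> [e_sym e_irr] conn T4 ore; split=> // S S2 x y.
rewrite !inE => xS yS.
suff : reached_around e S x y by rewrite /reached_around (negbTE yS).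
apply: (connect_ind_pred (R := induced e setT)) _ _ (conn x y (in_setT _) (in_setT _)).
  by rewrite /reached_around (negbTE xS) connect0.
move=> a b /andP [eab _].
exact: (reached_around_edge e_sym e_irr ore conn (ltnW T4) S2 eab).
Qed.
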